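(* Let $k \ge 2$ and $d \ge 1$ be integers and let $\varepsilon < 1/(k-1)$, $\delta := (k-1)\varepsilon/2$. Let $A$ and $B$ be random variables such that $A$ is uniformly distributed over $[2k]$ and, for each $a \in [2k]$, conditioned on $A=a$, $B$ is distributed according to a probability distribution $P_a$ on $[d]$ (viewed as a vector in $\mathbb{R}^d$). Assume that for all $r \in [k-1]$, $$\frac{1}{2k} \left\| \sum_{a=1}^r (P_a + P_{a+k}) - \sum_{a=r+1}^k (P_a + P_{a+k}) \right\|_1 \ge 1-\varepsilon.$$ Then $I(A:B) \ge \log k - \delta \log (k-1) - H(\delta)$.
   Context: $[m]$ denotes $\{1,\ldots,m\}$. All logarithms are base $2$. $H(\delta) := -\delta \log \delta - (1-\delta)\log(1-\delta)$ is the binary entropy function (with $0\log 0 = 0$). $I(A:B) = H(A)+H(B)-H(A,B)$ is the mutual information, where $H$ of a random variable denotes its Shannon entropy (base $2$). $\|\cdot\|_1$ is the $\ell_1$ norm on $\mathbb{R}^d$. *)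

From mathcomp Require Import all_boot all_order all_algebra.
From mathcomp Require Import all_classical all_reals all_analysis.
Set Implicit Arguments. Unset Strict Implicit. Unset Printing Implicit Defensive.
Import Order.TTheory GRing.Theory Num.Theory.
Local Open Scope ring_scope.

Section Info.
Variable R : realType.

Definition log2 (x : R) : R := ln x / ln 2.

Definition negxlogx (x : R) : R := if x == 0 then 0 else - (x * log2 x).

Definition entropy (T : finType) (p : T -> R) : R := \sum_(t : T) negxlogx (p t).

Definition binH (x : R) : R := negxlogx x + negxlogx (1 - x).

Definition mutinfo (TA TB : finType) (pAB : TA -> TB -> R) : R :=
  entropy (fun a => \sum_(b : TB) pAB a b)
  + entropy (fun b => \sum_(a : TA) pAB a b)
  - entropy (fun ab : TA * TB => pAB ab.1 ab.2).

Definition l1norm (d : nat) (v : 'I_d -> R) : R := \sum_(i < d) `|v i|.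

Definition is_distr (d : nat) (p : 'I_d -> R) : Prop :=
  (forall i, 0 <= p i) /\ \sum_(i < d) p i = 1.

End Info.

From mathcomp Require Import all_boot all_order all_algebra.
From mathcomp Require Import all_classical all_reals all_analysis.
From mathcomp Require Import ring lra zify.
Set Implicit Arguments. Unset Strict Implicit. Unset Printing Implicit Defensive.
Import Order.TTheory GRing.Theory Num.Theory.
Local Open Scope ring_scope.

(* For each value b of B pick a class c_b in [k] maximising P_c(b) + P_(c+k)(b).  Since
   |S - T| = S + T - 2 min(S, T), summing the hypothesis over the k - 1 splits r shows that
   the pairs {c_b, c_b + k} carry joint probability M >= 1 - delta.  Gibbs' inequality
   against the conditional law of A given B = b that puts (1 - delta)/2 on this pair and
   delta/(2(k-1)) on each other value bounds H(A,B) - H(B) by 1 + delta log(k-1) + H(delta)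
   as soon as M >= 1 - delta; with H(A) = 1 + log k this is the claim. *)

Section Entropy.
Variable R : realType.

Lemma ln2_gt0 : 0 < ln (2 : R).
Proof. by apply: ln_gt0; lra. Qed.

Lemma log2_2 : log2 (2 : R) = 1.
Proof. by rewrite /log2 divff // gt_eqF // ln2_gt0. Qed.

Lemma log2M (a b : R) : 0 < a -> 0 < b -> log2 (a * b) = log2 a + log2 b.
Proof. by move=> a0 b0; rewrite /log2 lnM ?posrE // mulrDl. Qed.

Lemma log2V (a : R) : 0 < a -> log2 a^-1 = - log2 a.
Proof. by move=> a0; rewrite /log2 lnV ?posrE // mulNr. Qed.

Lemma negxlogxE (x : R) : negxlogx x = - (x * log2 x).
Proof. by rewrite /negxlogx; case: eqP => [->|//]; rewrite mul0r oppr0. Qed.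

Lemma ln_le_subr1 (x : R) : 0 < x -> ln x <= x - 1.
Proof.
move=> x0; have := @le_ln1Dx R (x - 1).
by rewrite addrCA subrr addr0; apply; lra.
Qed.

(* The linearisation [ln (w/x) <= w/x - 1], in the form that survives [x = 0]. *)
Lemma negxlogx_le_cross (x w : R) : 0 <= x -> 0 <= w -> (0 < x -> 0 < w) ->
  - (x * log2 x) <= - (x * log2 w) + (w - x) / ln 2.
Proof.
move=> x0 w0 xw; have l2 := ln2_gt0.
have [->|xn0] := eqVneq x 0.
  by rewrite !mul0r oppr0 add0r addr0 divr_ge0 // ltW.
have xp : 0 < x by rewrite lt_def xn0 x0.
have wp := xw xp.
have lnwx : x * (ln w - ln x) <= w - x.
  have -> : w - x = x * (w / x - 1) by field; rewrite gt_eqF.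
  rewrite ler_wpM2l // -ln_div ?posrE //.
  by apply: ln_le_subr1; rewrite divr_gt0.
rewrite /log2 -subr_ge0.
have -> : - (x * (ln w / ln 2)) + (w - x) / ln 2 - - (x * (ln x / ln 2))
   = (w - x - x * (ln w - ln x)) / ln 2 by field; rewrite gt_eqF.
by rewrite divr_ge0 ?subr_ge0 // ltW.
Qed.

Lemma gibbs (I : finType) (x w : I -> R) :
  (forall i, 0 <= x i) -> (forall i, 0 <= w i) -> (forall i, 0 < x i -> 0 < w i) ->
  \sum_i w i <= \sum_i x i ->
  \sum_i - (x i * log2 (x i)) <= \sum_i - (x i * log2 (w i)).
Proof.
move=> x0 w0 xw sum_wx.
apply: (@le_trans _ _ (\sum_i (- (x i * log2 (w i)) + (w i - x i) / ln 2))).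
  by apply: ler_sum => i _; exact: negxlogx_le_cross (x0 i) (w0 i) (xw i).
rewrite big_split /= -mulr_suml sumrB gerDl.
by apply: mulr_le0_ge0; rewrite ?subr_le0 // invr_ge0 ltW // ln2_gt0.
Qed.

Lemma entropy_joint_le_cross (A B : finType) (x q : A -> B -> R) :
  (forall a b, 0 <= x a b) -> (forall a b, 0 <= q a b) ->
  (forall b, \sum_a q a b = 1) -> (forall a b, 0 < x a b -> 0 < q a b) ->
  entropy (fun ab : A * B => x ab.1 ab.2)
  <= entropy (fun b => \sum_a x a b) + \sum_a \sum_b - (x a b * log2 (q a b)).
Proof.
move=> x0 q0 q1 xq.
rewrite /entropy -(pair_big xpredT xpredT (fun a b => negxlogx (x a b))) /=.
rewrite exchange_big [X in _ + X]exchange_big -big_split /=.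
apply: ler_sum => b _; set s := \sum_a x a b.
have x_le_s a : x a b <= s by rewrite /s (bigD1 a) //= lerDl sumr_ge0.
have s0 : 0 <= s by rewrite sumr_ge0.
apply: (@le_trans _ _ (\sum_a - (x a b * log2 (s * q a b)))).
  under eq_bigr do rewrite negxlogxE.
  apply: gibbs => [a|a|a xp|]; first exact: x0.
  - by rewrite mulr_ge0.
  - by rewrite mulr_gt0 ?xq // (lt_le_trans xp).
  - by rewrite -mulr_sumr q1 mulr1.
rewrite negxlogxE {2}/s mulr_suml -sumrN -big_split /=.
rewrite le_eqVlt; apply/orP; left; apply/eqP/eq_bigr => a _.
have [->|xn0] := eqVneq (x a b) 0; first by rewrite !mul0r oppr0 addr0.
have xp : 0 < x a b by rewrite lt_def xn0 x0.
by rewrite log2M ?xq // ?(lt_le_trans xp) //; ring.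
Qed.

Lemma cross_entropy_pair_le (dl M K : R) :
  0 <= dl -> dl < 1 / 2 -> 1 - dl <= M -> M <= 1 -> 1 <= K ->
  - log2 (dl / (2 * K)) + (log2 (dl / (2 * K)) - log2 ((1 - dl) / 2)) * M
  <= 1 + dl * log2 K + binH dl.
Proof.
move=> dl0 dl_lt M_ge M_le1 K1; have l2 := ln2_gt0.
rewrite /binH !negxlogxE.
have [dl_0|dln0] := eqVneq dl 0.
  rewrite dl_0 subr0 in M_ge *.
  have -> : M = 1 by apply/eqP; rewrite eq_le M_le1 M_ge.
  have log2_1 : log2 (1 : R) = 0 by rewrite /log2 ln1 mul0r.
  have log2_half : log2 (1 / 2 : R) = -1 by rewrite div1r log2V ?log2_2.
  by rewrite log2_1 log2_half; lra.
have dlp : 0 < dl by rewrite lt_def dln0 dl0.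
have K0 : 0 < K by lra.
have log_u : log2 ((1 - dl) / 2) = log2 (1 - dl) - 1.
  by rewrite log2M ?invr_gt0 ?log2V ?log2_2 //; lra.
have log_v : log2 (dl / (2 * K)) = log2 dl - 1 - log2 K.
  by rewrite log2M ?invr_gt0 ?mulr_gt0 // log2V ?mulr_gt0 // log2M // log2_2; lra.
(* [dl / (2K) <= (1 - dl) / 2]: the coefficient of [M] is nonpositive, so [M = 1 - dl] is the worst case. *)
have v_le_u : log2 dl <= log2 (1 - dl) + log2 K.
  rewrite -log2M; try lra.
  by rewrite /log2 ler_pM2r ?invr_gt0 // ler_ln ?posrE; nra.
rewrite log_u log_v.
have : 0 <= (log2 K - log2 dl + log2 (1 - dl)) * (M - 1 + dl) by apply: mulr_ge0; lra.
nra.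
Qed.

End Entropy.

Section SplitSums.
Variable R : realDomainType.
Implicit Types z : nat -> R.

Lemma ler_term_sum_nat z m n i :
  (forall j, (m <= j < n)%N -> 0 <= z j) -> (m <= i < n)%N ->
  z i <= \sum_(m <= j < n) z j.
Proof.
move=> z0 hi; rewrite (bigD1_seq i) ?mem_index_iota ?iota_uniq //= lerDl.
by rewrite big_seq_cond sumr_ge0 // => j /andP[]; rewrite mem_index_iota => /z0.
Qed.

Lemma twice_le_addB_normB (v S T : R) : v <= S -> v <= T -> 2 * v <= S + T - `|S - T|.
Proof.
move=> vS vT; case: (lerP 0 (S - T)) => h.
  by rewrite ger0_norm //; lra.
by rewrite ltr0_norm //; lra.
Qed.

Lemma exists_argmax_nat z n :
  exists2 m, (1 <= m <= n.+1)%N & forall j, (1 <= j <= n.+1)%N -> z j <= z m.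
Proof.
have [i _ imax] := @arg_maxP _ R 'I_n.+1 ord0 xpredT (fun i => z i.+1) isT.
exists i.+1 => [|j /andP[j1 jn]]; first by rewrite ltnS ltn_ord.
have jE : j = (Ordinal (n := n.+1) (m := j.-1) ltac:(lia)).+1 by rewrite /=; lia.
by rewrite jE; apply: imax.
Qed.

Lemma sum_nat_skip z k c : (1 <= c <= k)%N ->
  \sum_(1 <= r < k) (if (r < c)%N then z r else z r.+1)
  = \sum_(1 <= r < k.+1) z r - z c.
Proof.
move=> /andP[c1 ck]; have ck1 := leqW ck.
rewrite [LHS](big_cat_nat (n := c)) // [in RHS](big_cat_nat (n := c)) //=.
rewrite (big_ltn (m := c) (n := k.+1)) ?ltnS // [\sum_(c.+1 <= i < k.+1) _]big_add1 /=.
rewrite [_ + (z c + _)]addrCA [RHS]addrC addKr; congr (_ + _); apply: eq_big_nat => r /andP[].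
  by move=> _ ->.
by move=> cr _; rewrite ltnNge cr.
Qed.

Lemma split_defect_sum_ge z k c :
  (forall j, (1 <= j <= k)%N -> 0 <= z j) -> (1 <= c <= k)%N ->
  (forall j, (1 <= j <= k)%N -> z j <= z c) ->
  2 * (\sum_(1 <= j < k.+1) z j - z c)
  <= \sum_(1 <= r < k) (\sum_(1 <= j < k.+1) z j
       - `|\sum_(1 <= j < r.+1) z j - \sum_(r.+1 <= j < k.+1) z j|).
Proof.
move=> z0 ck zmax; rewrite -sum_nat_skip // mulr_sumr.
apply: ler_sum_nat => r /andP[r1 rk].
have le_sum m n i : (1 <= m)%N -> (n <= k.+1)%N -> (m <= i < n)%N ->
    z i <= \sum_(m <= j < n) z j.
  by move=> m1 nk; apply: ler_term_sum_nat => j hj; apply: z0; lia.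
have rk1 : (r.+1 <= k.+1)%N by rewrite ltnW.
rewrite (big_cat_nat (n := r.+1)) //=.
case: ifP => rc; apply: twice_le_addB_normB.
all: first [apply: le_sum; lia | apply: le_trans (zmax _ _) _; [lia | apply: le_sum; lia]].
Qed.

End SplitSums.

Section OrdinalSums.
Variable V : zmodType.
Implicit Types f : nat -> V.

Lemma sum_ord_succ_eq f n j : (1 <= j <= n)%N ->
  \sum_(a < n) (if a.+1 == j then f a.+1 else 0) = f j.
Proof.
move=> jn; rewrite -big_mkcond /=.
rewrite (eq_bigl (fun a : 'I_n => a == j.-1 :> nat)); last first.
  by move=> a /=; apply/eqP/eqP; lia.
rewrite (big_ord1_eq _ (fun a => f a.+1)); case: ifP; last lia.
by move=> _; congr f; lia.
Qed.

Lemma sum_ord_succ_eq2 f n c c' : c != c' -> (1 <= c <= n)%N -> (1 <= c' <= n)%N ->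
  \sum_(a < n) (if (a.+1 == c) || (a.+1 == c') then f a.+1 else 0) = f c + f c'.
Proof.
move=> /negPf cc' cn c'n.
rewrite -(sum_ord_succ_eq f cn) -(sum_ord_succ_eq f c'n) -big_split /=.
apply: eq_bigr => a _; have [->|_] := eqVneq a.+1 c; last by rewrite add0r.
by rewrite cc' addr0.
Qed.

Lemma sum_nat_pairs f k :
  \sum_(1 <= c < k.+1) (f c + f (c + k)%N) = \sum_(a < 2 * k) f a.+1.
Proof.
rewrite big_split /= -(big_mkord xpredT (fun a => f a.+1)).
rewrite [RHS](big_cat_nat (n := k)) ?leq_pmull //= big_add1 /=; congr (_ + _).
rewrite big_add1 [RHS](_ : _ = \sum_(0 + k <= i < 2 * k) f i.+1) //.
rewrite big_addn mul2n -addnn addnK.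
by apply: eq_bigr => i _; rewrite addSn.
Qed.

End OrdinalSums.

Section PairedClasses.
Variables (R : realType) (k d : nat) (P : nat -> 'I_d -> R).
Hypothesis k_ge2 : (2 <= k)%N.
Hypothesis P_distr : forall a, (1 <= a <= 2 * k)%N -> is_distr (P a).

Local Notation N := ((2 * k)%:R : R).
Let x (a : 'I_(2 * k)) b := P a.+1 b / N.
Let z c b := P c b + P (c + k)%N b.
Let inpair (top : 'I_d -> nat) (a : 'I_(2 * k)) b :=
  (a.+1 == top b) || (a.+1 == (top b + k)%N).

Let N_gt0 : 0 < N.
Proof. by rewrite ltr0n muln_gt0; case: k k_ge2. Qed.

Let P_ge0 a b : (1 <= a <= 2 * k)%N -> 0 <= P a b.
Proof. by move=> /P_distr[+ _]; apply. Qed.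

Let x_ge0 a b : 0 <= x a b.
Proof. exact: divr_ge0 (@P_ge0 a.+1 b (ltn_ord a)) (ltW N_gt0). Qed.

Let sum_x a : \sum_b x a b = N^-1.
Proof. by rewrite -mulr_suml; case: (@P_distr a.+1 (ltn_ord a)) => _ ->; rewrite mul1r. Qed.

Let sum_xx : \sum_b \sum_a x a b = 1.
Proof.
by rewrite exchange_big /= (eq_bigr _ (fun a _ => sum_x a)) sumr_const card_ord
  -[_ *+ _]mulr_natr mulVf // gt_eqF.
Qed.

Let z_ge0 c b : (1 <= c <= k)%N -> 0 <= z c b.
Proof. by move=> ck; rewrite addr_ge0 ?P_ge0 //; lia. Qed.

Let sum_z b : \sum_(1 <= c < k.+1) z c b = N * \sum_a x a b.
Proof.
rewrite /z (sum_nat_pairs (fun c => P c b)) mulr_sumr.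
by apply: eq_bigr => a _; rewrite mulrC divfK ?gt_eqF.
Qed.

Lemma entropy_uniform_marginal : entropy (fun a => \sum_b x a b) = 1 + log2 k%:R.
Proof.
rewrite /entropy (eq_bigr _ (fun a _ => congr1 (@negxlogx R) (sum_x a))).
rewrite sumr_const card_ord.
rewrite negxlogxE log2V // mulrN opprK -[_ *+ _]mulr_natl mulrA mulfV ?gt_eqF // mul1r.
by rewrite natrM log2M ?log2_2 // ltr0n; case: k k_ge2.
Qed.

Lemma exists_heavy_pairs (eps : R) :
  (forall r, (1 <= r <= k - 1)%N ->
     1 / N * l1norm (fun b => \sum_(1 <= a < r.+1) z a b - \sum_(r.+1 <= a < k.+1) z a b)
     >= 1 - eps) ->
  exists2 top : 'I_d -> nat, (forall b, (1 <= top b <= k)%N)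
    & 1 - (k%:R - 1) * eps / 2 <= \sum_b z (top b) b / N.
Proof.
move=> split_far.
have argmax b : exists c,
    (1 <= c <= k)%N /\ forall j, (1 <= j <= k)%N -> z j b <= z c b.
  have [c ck cmax] := exists_argmax_nat (z^~ b) k.-1.
  by exists c; rewrite prednK ?(ltnW k_ge2) in ck cmax.
have [top top_max] := choice argmax.
exists top => [b|]; first by case: (top_max b).
pose total b := \sum_(1 <= c < k.+1) z c b.
pose gap r b := `|\sum_(1 <= a < r.+1) z a b - \sum_(r.+1 <= a < k.+1) z a b|.
have total_sum : \sum_b total b = N.
  by rewrite /total (eq_bigr _ (fun b _ => sum_z b)) -mulr_sumr sum_xx mulr1.
have per_b b : 2 * (total b - z (top b) b) <= \sum_(1 <= r < k) (total b - gap r b).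
  by case: (top_max b) => tb tmax; apply: split_defect_sum_ge => // j /z_ge0.
have per_r r : (1 <= r < k)%N -> \sum_b (total b - gap r b) <= N * eps.
  move=> rk; have := split_far r ltac:(lia).
  by rewrite /l1norm div1r ler_pdivlMl // sumrB total_sum /gap; lra.
have defect : \sum_b 2 * (total b - z (top b) b) <= (k%:R - 1) * (N * eps).
  apply: le_trans (ler_sum _ (fun b _ => per_b b)) _.
  rewrite exchange_big /=; apply: le_trans (ler_sum_nat per_r) _.
  by rewrite sumr_const_nat -[_ *+ _]mulr_natl natrB ?(ltnW k_ge2).
rewrite -mulr_sumr sumrB total_sum in defect.
rewrite -big_distrl /= ler_pdivlMr //; lra.
Qed.

Let sum_inpair top b (f : nat -> R) : (1 <= top b <= k)%N ->
  \sum_a (if inpair top a b then f a.+1 else 0) = f (top b) + f (top b + k)%N.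
Proof. by move=> tb; apply: sum_ord_succ_eq2; lia. Qed.

Let off_pair_mass top : (forall b, (1 <= top b <= k)%N) ->
  \sum_b \sum_a (if inpair top a b then 0 else x a b) = 1 - \sum_b z (top b) b / N.
Proof.
move=> range; rewrite -{1}sum_xx -sumrB; apply: eq_bigr => b _.
have := sum_inpair (fun c => P c b / N) (range b); rewrite -mulrDl /z => <-.
by rewrite -sumrB; apply: eq_bigr => a _; case: ifP; rewrite ?subrr ?subr0.
Qed.

Lemma pair_mass_le1 top : (forall b, (1 <= top b <= k)%N) -> \sum_b z (top b) b / N <= 1.
Proof.
move=> /off_pair_mass off; rewrite -subr_ge0 -off.
by do 2!apply: sumr_ge0 => ? _; case: ifP.
Qed.

Lemma entropy_joint_le_pairs top (u v : R) :
  (forall b, (1 <= top b <= k)%N) -> 0 < u -> 0 <= v ->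
  2 * u + 2 * (k%:R - 1) * v = 1 -> (v = 0 -> \sum_b z (top b) b / N = 1) ->
  entropy (fun ab : 'I_(2 * k) * 'I_d => x ab.1 ab.2)
  <= entropy (fun b => \sum_a x a b) - log2 v
     + (log2 v - log2 u) * \sum_b z (top b) b / N.
Proof.
move=> range u0 v0 uv mass1.
pose q a b := if inpair top a b then u else v.
have q_ge0 a b : 0 <= q a b by rewrite /q; case: ifP => _ //; apply: ltW.
have q_sum b : \sum_a q a b = 1.
  rewrite (eq_bigr (fun a => v + (if inpair top a b then u - v else 0))); last first.
    by move=> a _; rewrite /q; case: ifP => _; rewrite ?addr0 // addrC subrK.
  rewrite big_split /= sumr_const card_ord (sum_inpair (fun=> u - v)) //.
  by rewrite -[_ *+ _]mulr_natr natrM; lra.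
have off_ge0 b a : 0 <= (if inpair top a b then 0 else x a b) by case: ifP.
have off_zero a b : v = 0 -> ~~ inpair top a b -> x a b = 0.
  move=> /mass1 M1 /negPf off; have := off_pair_mass range; rewrite M1 subrr.
  move=> /psumr_eq0P-/(_ (fun b _ => sumr_ge0 _ (fun a _ => off_ge0 b a)) b isT).
  by move=> /psumr_eq0P-/(_ (fun a _ => off_ge0 b a) a isT); rewrite off.
have x_q a b : 0 < x a b -> 0 < q a b.
  rewrite /q; case: ifP => // /negbT off xp; rewrite lt_def v0 andbT.
  by apply/eqP => /off_zero/(_ off) x0; rewrite x0 ltxx in xp.
have cross a b : - (x a b * log2 (q a b))
    = - log2 v * x a b + (log2 v - log2 u) * (if inpair top a b then x a b else 0).
  by rewrite /q; case: ifP => _; ring.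
apply: le_trans (entropy_joint_le_cross x_ge0 q_ge0 q_sum x_q) _.
rewrite -addrA lerD2l exchange_big /=.
rewrite (eq_bigr _ (fun b _ => eq_bigr _ (fun a _ => cross a b))).
under eq_bigr do rewrite big_split -!mulr_sumr /=.
rewrite big_split -!mulr_sumr /= sum_xx mulr1.
rewrite (eq_bigr _ (fun b _ => sum_inpair (fun c => P c b / N) (range b))).
by under eq_bigr do rewrite -mulrDl.
Qed.

Lemma entropy_joint_le_heavy top (dl : R) :
  (forall b, (1 <= top b <= k)%N) -> 0 <= dl -> dl < 1 / 2 ->
  1 - dl <= \sum_b z (top b) b / N ->
  entropy (fun ab : 'I_(2 * k) * 'I_d => x ab.1 ab.2)
  <= entropy (fun b => \sum_a x a b) + 1 + dl * log2 (k%:R - 1) + binH dl.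
Proof.
move=> range dl0 dl_lt heavy; have mass_le1 := pair_mass_le1 range.
have k1_ge1 : 1 <= k%:R - 1 :> R by rewrite lerBrDr (_ : 1 + 1 = 2%:R) // ler_nat.
set u := (1 - dl) / 2; set v := dl / (2 * (k%:R - 1)).
have u_gt0 : 0 < u by rewrite /u; lra.
have v_ge0 : 0 <= v by rewrite /v divr_ge0 //; lra.
have uv : 2 * u + 2 * (k%:R - 1) * v = 1 by rewrite /u /v; field; lra.
have v0_mass : v = 0 -> \sum_b z (top b) b / N = 1.
  have : v * (2 * (k%:R - 1)) = dl by rewrite /v; field; lra.
  move=> v_dl v0; rewrite -v_dl v0 mul0r subr0 in heavy.
  by apply/eqP; rewrite eq_le mass_le1 heavy.
apply: le_trans (entropy_joint_le_pairs range u_gt0 v_ge0 uv v0_mass) _.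
have := cross_entropy_pair_le dl0 dl_lt heavy mass_le1 k1_ge1.
rewrite -/u -/v; lra.
Qed.

End PairedClasses.

Theorem mainTheorem2 (R : realType) (k d : nat) (eps : R) (P : nat -> 'I_d -> R) :
  (2 <= k)%N -> (1 <= d)%N ->
  eps < 1 / (k%:R - 1) ->
  (forall a, (1 <= a <= 2 * k)%N -> is_distr (P a)) ->
  (forall r, (1 <= r <= k - 1)%N ->
     1 / (2 * k)%:R *
       l1norm (fun b : 'I_d =>
         \sum_(1 <= a < r.+1) (P a b + P (a + k)%N b)
         - \sum_(r.+1 <= a < k.+1) (P a b + P (a + k)%N b))
     >= 1 - eps) ->
  let delta := (k%:R - 1) * eps / 2 in
  mutinfo (fun (a : 'I_(2 * k)) (b : 'I_d) => P a.+1 b / (2 * k)%:R)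
  >= log2 k%:R - delta * log2 (k%:R - 1) - binH delta.
Proof.
move=> k_ge2 _ eps_lt P_distr split_far; cbv zeta.
set delta := (k%:R - 1) * eps / 2.
have [top top_range heavy] := exists_heavy_pairs k_ge2 P_distr split_far.
rewrite -/delta in heavy.
have delta_ge0 : 0 <= delta by have := pair_mass_le1 k_ge2 P_distr top_range; lra.
have delta_lt : delta < 1 / 2.
  have k1_gt0 : 0 < k%:R - 1 :> R by rewrite subr_gt0 ltr1n.
  by move: eps_lt; rewrite ltr_pdivlMr // /delta; lra.
have := entropy_joint_le_heavy k_ge2 P_distr top_range delta_ge0 delta_lt heavy.
by rewrite /mutinfo entropy_uniform_marginal //; lra.
Qed.
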